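(* Let $X$, $Z$ be topological vector spaces, $C\subseteq Z$ a nonempty closed convex cone with $C^-\neq\{0\}$, and $f:X\to\mathcal{F}(Z,C)$. If $f$ is upper lattice-semicontinuous at $x_0\in{\rm dom\,} f$, then there exists a neighborhood $U$ of $x_0$ such that $f$ is lattice-bounded above on $U$.
   Context: $\mathcal{F}(Z,C)=\{A\subseteq Z\colon A=\operatorname{cl}(A+C)\}$ (empty set included); $C^-=\{z^*\in Z^*\colon z^*(z)\le0\ \forall z\in C\}$; ${\rm dom\,} f=\{x\colon f(x)\neq\emptyset\}$. $f$ is upper lattice-semicontinuous at $x_0$ iff $f(x_0)\subseteq\operatorname{cl}\bigcup_{U\in\mathcal{N}(x_0)}\bigcap_{x\in U}f(x)$, where $\mathcal{N}(x_0)$ is the system of neighborhoods of $x_0$; equivalently, for every $z_0\in f(x_0)$ and every neighborhood $V$ of $z_0$ there exist $U\in\mathcal{N}(x_0)$ and $z\in V$ with $z\in f(x)$ for all $x\in U$. $f$ is lattice-bounded above on $M\subseteq X$ iff there is $a\in Z$ with $a\in f(x)$ for all $x\in M$. *)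

From HB Require Import structures.
From mathcomp Require Import all_boot all_order all_algebra.
From mathcomp Require Import all_classical all_reals all_analysis.
Set Implicit Arguments. Unset Strict Implicit. Unset Printing Implicit Defensive.
Import Order.TTheory GRing.Theory Num.Theory.
Local Open Scope classical_set_scope.
Local Open Scope ring_scope.

Section Defs.
Context {R : realType} {Z : topologicalLmodType R}.

Definition set_add (A C : set Z) : set Z := [set a + c | a in A & c in C].

Definition is_cone (C : set Z) : Prop :=
  forall (t : R) z, 0 <= t -> C z -> C (t *: z).
Definition is_convex (C : set Z) : Prop :=
  forall (l : R) x y, 0 <= l <= 1 -> C x -> C y -> C (l *: x + (1 - l) *: y).

Definition dual_space : set (Z -> R) :=
  [set phi | (forall (a : R) (u v : Z), phi (a *: u + v) = a * phi u + phi v)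
             /\ continuous (phi : Z -> R^o)].

Definition polar_cone (C : set Z) : set (Z -> R) :=
  [set phi | dual_space phi /\ forall z, C z -> phi z <= 0].

(* A \in F(Z,C)  iff  A = cl (A + C)  (empty set included) *)
Definition F_ZC (C : set Z) : set (set Z) :=
  [set A | A = closure (set_add A C)].
End Defs.

Section Defs2.
Context {R : realType} {X Z : topologicalLmodType R}.

Definition dom_sv (f : X -> set Z) : set X := [set x | f x !=set0].

Definition upper_lattice_sc (f : X -> set Z) (x0 : X) : Prop :=
  f x0 `<=` closure (\bigcup_(U in nbhs x0) \bigcap_(x in U) f x).

Definition lattice_bounded_above (f : X -> set Z) (M : set X) : Prop :=
  exists a : Z, forall x, M x -> f x a.
End Defs2.

From HB Require Import structures.
From mathcomp Require Import all_boot all_order all_algebra.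
From mathcomp Require Import all_classical all_reals all_analysis.
Import Order.TTheory GRing.Theory Num.Theory.
Local Open Scope classical_set_scope.
Local Open Scope ring_scope.

(* Any point of f x0 is approximated within the neighborhood setT by some z
   lying in f x for all x of a neighborhood U of x0; that z bounds f on U. *)
Lemma upper_lattice_sc_bounded_near {R : realType} {X Z : topologicalLmodType R}
    {f : X -> set Z} {x0 : X} :
  dom_sv f x0 -> upper_lattice_sc f x0 ->
  exists2 U, nbhs x0 U & lattice_bounded_above f U.
Proof.
move=> [z0 fx0z0] /(_ z0 fx0z0) z0_cl.
have [z [[U x0U fUz] _]] := z0_cl setT filterT.
by exists U => //; exists z.
Qed.

Theorem mainTheorem6 (R : realType) (X Z : topologicalLmodType R)
  (C : set Z) (f : X -> set Z) (x0 : X) :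
  C !=set0 -> closed C -> is_cone C -> is_convex C ->
  polar_cone C <> [set (fun _ : Z => 0 : R)] ->
  (forall x, F_ZC C (f x)) ->
  dom_sv f x0 ->
  upper_lattice_sc f x0 ->
  exists U, nbhs x0 U /\ lattice_bounded_above f U.
Proof.
move=> _ _ _ _ _ _ domx0 uscx0.
by have [U x0U bddU] := upper_lattice_sc_bounded_near domx0 uscx0; exists U.
Qed.
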